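(* Let $T\in\mathbb{N}$ and let $\mathcal{A}=\{O_1,\dots,O_k\}$ be a finite action set of traceless observables on $\mathbb{C}^d$ such that there exist two distinct $O_a,O_b\in\mathcal{A}$ with eigenvectors $|\psi_A\rangle,|\psi_B\rangle$ for their respective largest eigenvalues satisfying, for all $i\ne a$ and $j\ne b$, $$\langle\psi_A|O_a|\psi_A\rangle>\langle\psi_A|O_i|\psi_A\rangle\quad\text{and}\quad\langle\psi_B|O_b|\psi_B\rangle>\langle\psi_B|O_j|\psi_B\rangle.$$ Then for any policy $\pi$ there exists an environment $\rho\in\mathcal{S}_d$ such that $$\mathbb{E}_{\rho,\pi}\big[R_T(\mathcal{A},\rho,\pi)\big]\ge C_{\mathcal{A}}\sqrt T,$$ where $C_{\mathcal{A}}>0$ is a constant that depends only on the action set.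
   Context: $\mathcal{S}_d$ is the set of density matrices on $\mathbb{C}^d$; observables are Hermitian $d\times d$ matrices. Discrete multi-armed quantum bandit: in each round $t=1,\dots,T$ the learner receives a copy of the unknown state $\rho$, chooses $A_t\in[k]$ according to a policy $\pi=(\pi_t)$, where $\pi_t(\cdot\mid a_1,x_1,\dots,a_{t-1},x_{t-1})$ is a probability distribution on $[k]$, and measures $\rho$ in the eigenbasis of $O_{A_t}=\sum_i\lambda_{A_t,i}\Pi_{A_t,i}$ (spectral decomposition), receiving reward $X_t=\lambda_{A_t,i}$ with probability $\mathrm{Tr}(\rho\Pi_{A_t,i})$. The regret is $R_T(\mathcal{A},\rho,\pi)=\sum_{t=1}^T\big(\max_{O\in\mathcal{A}}\mathrm{Tr}(\rho O)-\mathrm{Tr}(\rho O_{A_t})\big)$ and $\mathbb{E}_{\rho,\pi}$ is the expectation over the induced process. *)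

From mathcomp Require Import all_boot all_algebra.
From mathcomp Require Import reals.
From mathcomp Require Import complex.
Set Implicit Arguments. Unset Strict Implicit. Unset Printing Implicit Defensive.
Import GRing.Theory Num.Theory.
Local Open Scope ring_scope.

Section QBandit.
Variable R : realType.
Local Notation C := R[i].

Definition adjmx (m n : nat) (A : 'M[C]_(m, n)) : 'M[C]_(n, m) :=
  \matrix_(i, j) Num.conj (A j i).

Definition is_hermitian (d : nat) (A : 'M[C]_d) : Prop := adjmx A = A.

Definition qform (d : nat) (A : 'M[C]_d) (v : 'cV[C]_d) : C :=
  (adjmx v *m A *m v) 0 0.

Definition density (d : nat) (rho : 'M[C]_d) : Prop :=
  [/\ is_hermitian rho, (forall v : 'cV[C]_d, 0 <= qform rho v) & \tr rho = 1].

Definition projector (d : nat) (P : 'M[C]_d) : Prop :=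
  is_hermitian P /\ P *m P = P.

Definition spectral_decomp (d m : nat) (O : 'M[C]_d)
    (lam : 'I_m -> R) (P : 'I_m -> 'M[C]_d) : Prop :=
  [/\ injective lam,
      forall i, projector (P i) /\ P i != 0,
      forall i j, i != j -> P i *m P j = 0,
      \sum_i P i = 1%:M
    & O = \sum_i ((lam i)%:C)%C *: P i].

Definition top_eigvec (d : nat) (O : 'M[C]_d) (psi : 'cV[C]_d) : Prop :=
  psi != 0 /\
  exists mu : C, O *m psi = mu *: psi /\
    forall (nu : C) (v : 'cV[C]_d), v != 0 -> O *m v = nu *: v -> nu <= mu.

(* A policy: pi t h a = probability of choosing action a at round t
   given the history h = [(a_1,x_1);...;(a_{t-1},x_{t-1})]. *)
Definition policy (k : nat) := nat -> seq ('I_k * R) -> 'I_k -> R.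

Definition valid_policy (k : nat) (pi : policy k) : Prop :=
  forall t h, (forall a, 0 <= pi t h a) /\ \sum_a pi t h a = 1.

Definition mean (d : nat) (rho O : 'M[C]_d) : R := complex.Re (\tr (rho *m O)).

Definition gap (d k : nat) (O : 'I_k -> 'M[C]_d) (rho : 'M[C]_d) (a : 'I_k) : R :=
  \big[Num.max/mean rho (O a)]_(b < k) mean rho (O b) - mean rho (O a).

(* Expected regret accumulated over n further rounds, starting from
   history h (so the next round is t = size h + 1), under the process
   induced by rho and pi: action a drawn from pi_t(.|h), then outcome i
   of the measurement of O_a observed with probability Tr(rho P_{a,i}),
   yielding reward lam_{a,i}. *)
Fixpoint exp_regret_from (d k : nat) (O : 'I_k -> 'M[C]_d) (m : 'I_k -> nat)
    (lam : forall a, 'I_(m a) -> R) (P : forall a, 'I_(m a) -> 'M[C]_d)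
    (rho : 'M[C]_d) (pi : policy k) (n : nat) (h : seq ('I_k * R)) : R :=
  match n with
  | 0 => 0
  | n'.+1 =>
      \sum_(a < k) pi (size h).+1 h a *
        (gap O rho a +
         \sum_(i < m a) mean rho (P a i) *
            exp_regret_from O lam P rho pi n' (rcons h (a, lam a i)))
  end.

Definition exp_regret (d k : nat) (O : 'I_k -> 'M[C]_d) (m : 'I_k -> nat)
    (lam : forall a, 'I_(m a) -> R) (P : forall a, 'I_(m a) -> 'M[C]_d)
    (rho : 'M[C]_d) (pi : policy k) (T : nat) : R :=
  exp_regret_from O lam P rho pi T [::].

End QBandit.

From mathcomp Require Import all_boot all_algebra.
From mathcomp Require Import reals.
From mathcomp Require Import complex.
From mathcomp Require Import ring lra.
Import order.Order.TTheory GRing.Theory Num.Theory.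
Set Implicit Arguments. Unset Strict Implicit. Unset Printing Implicit Defensive.
Local Open Scope ring_scope.

(* The eigenvectors give two pure states rA and rB.  Along the mixtures
   l rA + (1 - l) rB the best mean reward is a convex piecewise linear function
   of l; as a is the best arm at l = 1 and b the best arm at l = 0, it has a
   kink at some l0 in (0, 1), where b ties with an arm u of steeper slope.
   Moving l0 to l0 + eps and l0 - eps yields two environments in which the
   gaps of every arm add up to at least eps * gam (gam the difference of
   slopes), while the outcome distributions of every arm are close: their
   Bhattacharyya coefficient is at least 1 - 2 eps^2 / mu, where
   mu = min l0 (1 - l0).  A recursion on the horizon then shows that the two
   expected regrets add up to a multiple of eps * gam * T as long as eps^2 T
   is small, and eps ~ 1 / sqrt T gives the sqrt T lower bound. *)

Section RealInequalities.
Variable R : rcfType.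
Implicit Types b c g u v : R.

Lemma bernoulli_ineq b n : 0 <= b -> 1 - n%:R * (1 - b) <= b ^+ n.
Proof.
move=> b0; elim: n => [|n IH]; first by rewrite mul0r subr0 expr0.
rewrite exprS; apply: le_trans (ler_wpM2l b0 IH).
have : 0 <= n%:R * (1 - b) ^+ 2 :> R by rewrite mulr_ge0 ?sqr_ge0.
rewrite -natr1; move: (n%:R : R) => N; nra.
Qed.

Lemma sum_exprn_ge b c T : 0 <= b <= 1 -> T%:R * (1 - b) <= c ->
  T%:R * (1 - c) <= \sum_(s < T) b ^+ s.
Proof.
move=> /andP[b0 b1] Tb.
have -> : T%:R * (1 - c) = \sum_(s < T) (1 - c) by rewrite sumr_const card_ord mulr_natl.
apply: ler_sum => s _; have := bernoulli_ineq s b0; apply: le_trans.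
have : s%:R <= T%:R :> R by rewrite ler_nat ltnW.
have : 0 <= 1 - b by rewrite subr_ge0.
move: (s%:R : R) => x; nra.
Qed.

Lemma split_weight_le g g1 g2 u v : 0 <= g1 -> 0 <= g2 -> 0 <= g <= g1 + g2 ->
  0 <= u -> 0 <= v -> g * (3/2 * (u * v) - (u ^+ 2 + v ^+ 2) / 2) <= u ^+ 2 * g1 + v ^+ 2 * g2.
Proof.
move=> g10 g20 /andP[g0 gg] u0 v0.
set w := _ - _.
have wu : w <= u ^+ 2 by have := sqr_ge0 (u - v / 2); have := sqr_ge0 v; rewrite /w; nra.
have wv : w <= v ^+ 2 by have := sqr_ge0 (v - u / 2); have := sqr_ge0 u; rewrite /w; nra.
have [w0|w0] := lerP w 0.
  have : g * w <= 0 by rewrite mulr_ge0_le0.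
  have : 0 <= u ^+ 2 * g1 + v ^+ 2 * g2 by rewrite addr_ge0 ?mulr_ge0 ?sqr_ge0.
  lra.
have : g * w <= (g1 + g2) * w by rewrite ler_wpM2r // ltW.
have : g1 * w <= g1 * u ^+ 2 by rewrite ler_wpM2l.
have : g2 * w <= g2 * v ^+ 2 by rewrite ler_wpM2l.
lra.
Qed.

Lemma sqrt_mix_mul_ge (pA pB l0 mu e : R) : 0 <= pA -> 0 <= pB -> 0 < mu ->
  mu <= l0 -> mu <= 1 - l0 -> 0 <= e <= mu ->
  (l0 - e ^+ 2 / mu) * pA + (1 - l0 - e ^+ 2 / mu) * pB <=
  Num.sqrt ((l0 + e) * pA + (1 - (l0 + e)) * pB) *
  Num.sqrt ((l0 - e) * pA + (1 - (l0 - e)) * pB).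
Proof.
move=> pA0 pB0 mu0 mul0 mul1 /andP[e0 emu].
set s := pA + pB; set p0 := l0 * pA + (1 - l0) * pB; set c := e ^+ 2 / mu.
have -> : (l0 - c) * pA + (1 - l0 - c) * pB = p0 - c * s by rewrite /p0 /s; ring.
have -> : (l0 + e) * pA + (1 - (l0 + e)) * pB = p0 + e * (pA - pB) by rewrite /p0; ring.
have -> : (l0 - e) * pA + (1 - (l0 - e)) * pB = p0 - e * (pA - pB) by rewrite /p0; ring.
have p0_ge : mu * s <= p0.
  have : mu * pA <= l0 * pA by rewrite ler_wpM2r.
  have : mu * pB <= (1 - l0) * pB by rewrite ler_wpM2r.
  rewrite /p0 /s; lra.
have cmu : c * mu = e ^+ 2 by rewrite /c divfK ?gt_eqF.
have c0 : 0 <= c by rewrite divr_ge0 ?sqr_ge0 ?ltW.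
have ce : c <= e.
  by rewrite /c ler_pdivrMr // expr2 ler_wpM2l.
have s0 : 0 <= s by rewrite addr_ge0.
have hp : 0 <= p0 + e * (pA - pB).
  have : 0 <= (l0 + e) * pA + (1 - (l0 + e)) * pB by rewrite addr_ge0 // mulr_ge0 //; lra.
  rewrite /p0; lra.
rewrite -sqrtrM //.
(* After squaring, the claim reads [c^2 s^2 + e^2 (pA - pB)^2 <= 2 c s p0],
   which follows from [c <= e], [(pA - pB)^2 <= s^2] and [e^2 s^2 = c s (mu s) <= c s p0]. *)
have [y0|y0] := lerP (p0 - c * s) 0; first exact: le_trans y0 (sqrtr_ge0 _).
rewrite -[X in X <= _](ger0_norm (ltW y0)) -sqrtr_sqr; apply: ler_wsqrtr.
have d2 : e ^+ 2 * (pA - pB) ^+ 2 <= e ^+ 2 * s ^+ 2.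
  by rewrite ler_wpM2l ?sqr_ge0 // /s; nra.
have c2 : c ^+ 2 * s ^+ 2 <= e ^+ 2 * s ^+ 2.
  by rewrite ler_wpM2r ?sqr_ge0 // ler_sqr ?nnegrE.
have : 2 * c * s * (mu * s) <= 2 * c * s * p0.
  by rewrite ler_wpM2l // mulr_ge0 // mulr_ge0.
have -> : 2 * c * s * (mu * s) = 2 * e ^+ 2 * s ^+ 2 by rewrite -cmu; ring.
lra.
Qed.

Lemma ler_sum_convex (I : finType) (w F : I -> R) (L : R) :
  (forall i, 0 <= w i) -> \sum_i w i = 1 -> (forall i, L <= F i) -> L <= \sum_i w i * F i.
Proof.
move=> w0 w1 LF; rewrite -[L]mul1r -w1 mulr_suml.
by apply: ler_sum => i _; rewrite ler_wpM2l.
Qed.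

Lemma div_sqrtn_bounds c T : 0 <= c ->
  [/\ 0 <= c / Num.sqrt T%:R <= c, (c / Num.sqrt T%:R) ^+ 2 * T%:R <= c ^+ 2
    & c / Num.sqrt T%:R * T%:R = c * Num.sqrt T%:R].
Proof.
move=> c0; have [->|T0] := posnP T.
  by rewrite sqrtr0 invr0 mulr0 expr0n /= !mul0r lexx c0 sqr_ge0.
have s1 : 1 <= Num.sqrt (T%:R : R).
  by have := @ler_wsqrtr R 1 T%:R; rewrite sqrtr1 ler1n => /(_ T0).
have s0 : Num.sqrt (T%:R : R) != 0 by rewrite gt_eqF // (lt_le_trans ltr01).
have sT : T%:R = Num.sqrt (T%:R : R) ^+ 2 by rewrite sqr_sqrtr ?ler0n.
split.
- by rewrite divr_ge0 ?sqrtr_ge0 //= ler_pdivrMr ?(lt_le_trans ltr01) // ler_peMr.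
- by rewrite [X in _ * X]sT expr_div_n divfK ?expf_neq0.
- by rewrite [X in _ * X]sT expr2 mulrA divfK.
Qed.

Lemma small_perturbation_bounds (mu eps T : R) : 0 < mu <= 1 -> 0 <= eps <= mu / 12 ->
  eps ^+ 2 * T <= (mu / 12) ^+ 2 ->
  [/\ eps <= mu, 0 <= 1 - 2 / mu * eps ^+ 2 <= 1 & T * (1 - (1 - 2 / mu * eps ^+ 2)) <= 1 / 6].
Proof.
move=> /andP[mu0 mu1] /andP[eps0 eps_mu] epsT.
have eps2 : eps ^+ 2 <= (mu / 12) ^+ 2 by rewrite ler_sqr ?nnegrE //; lra.
have dev z : z <= (mu / 12) ^+ 2 -> 2 / mu * z <= mu / 72.
  have -> : mu / 72 = 2 / mu * (mu / 12) ^+ 2 by field; rewrite gt_eqF.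
  by move=> zmu; rewrite ler_wpM2l // divr_ge0 ?ltW.
have := dev _ eps2; have := dev _ epsT.
have : 0 <= 2 / mu * eps ^+ 2 by rewrite mulr_ge0 ?sqr_ge0 ?divr_ge0 ?ltW.
move=> *; split; try apply/andP; try split; lra.
Qed.

Lemma le_of_double_le_add (x y z : R) : z * 2 <= x + y -> y <= x -> z <= x.
Proof. by move=> *; lra. Qed.

End RealInequalities.

Section UpperEnvelope.
Variable R : realFieldType.

Lemma upper_envelope_kink (I : finType) (qA qB : I -> R) a b :
  a != b -> (forall x, x != a -> qA x < qA a) -> (forall x, x != b -> qB x < qB b) ->
  exists l0 u, [/\ 0 < l0 < 1,
    forall x, l0 * qA x + (1 - l0) * qB x <= l0 * qA b + (1 - l0) * qB b,
    l0 * qA u + (1 - l0) * qB u = l0 * qA b + (1 - l0) * qB b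
    & qA b - qB b < qA u - qB u].
Proof.
move=> ab maxA maxB.
pose t x := qA x - qB x.
have lineE l x : l * qA x + (1 - l) * qB x = qB x + l * t x by rewrite /t; ring.
pose cross x := (qB b - qB x) / (t x - t b).
have maxAb := maxA b; have maxBa := maxB a; rewrite eq_sym ab in maxAb maxBa.
pose steep x := t b < t x.
have steep_a : steep a by rewrite /steep /t; have := maxAb isT; have := maxBa isT; lra.
case: (arg_minP cross steep_a) => u steep_u cross_min.
have tu : 0 < t u - t b by rewrite subr_gt0.
have ub : u != b by apply: contraTneq steep_u => ->; rewrite /steep ltxx.
have crossE : cross u * (t u - t b) = qB b - qB u by rewrite /cross divfK ?gt_eqF.
exists (cross u), u; split => [|x||]; rewrite ?lineE //.
- rewrite divr_gt0 ?subr_gt0 ?maxB //=; apply: le_lt_trans (cross_min a steep_a) _.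
  by rewrite ltr_pdivrMr ?subr_gt0 // mul1r; have := maxAb isT; rewrite /t; lra.
- have [steep_x|flat_x] := boolP (steep x).
    have := cross_min x steep_x; rewrite {2}/cross ler_pdivlMr ?subr_gt0 //; nra.
  rewrite /steep -leNgt in flat_x.
  have qBx : qB x <= qB b by have [->|/maxB/ltW] := eqVneq x b.
  have : 0 <= cross u by rewrite -(pmulr_lge0 _ tu) crossE subr_ge0 ltW ?maxB.
  nra.
- by move: crossE; lra.
Qed.

Lemma envelope_gap_sum (I : Type) (qA qB : I -> R) (l0 eps : R) (u b x : I) :
  l0 * qA x + (1 - l0) * qB x <= l0 * qA b + (1 - l0) * qB b ->
  l0 * qA u + (1 - l0) * qB u = l0 * qA b + (1 - l0) * qB b ->
  eps * ((qA u - qB u) - (qA b - qB b)) <=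
    ((l0 + eps) * qA u + (1 - (l0 + eps)) * qB u - ((l0 + eps) * qA x + (1 - (l0 + eps)) * qB x))
  + ((l0 - eps) * qA b + (1 - (l0 - eps)) * qB b - ((l0 - eps) * qA x + (1 - (l0 - eps)) * qB x)).
Proof. lra. Qed.

End UpperEnvelope.

Section Adjoint.
Variable R : realType.
Local Notation C := R[i].

Lemma adjmxM m n p (A : 'M[C]_(m, n)) (B : 'M[C]_(n, p)) :
  adjmx (A *m B) = adjmx B *m adjmx A.
Proof.
apply/matrixP => i j; rewrite !mxE rmorph_sum; apply: eq_bigr => l _.
by rewrite !mxE rmorphM mulrC.
Qed.

Lemma adjmxK m n (A : 'M[C]_(m, n)) : adjmx (adjmx A) = A.
Proof. by apply/matrixP => i j; rewrite !mxE conjCK. Qed.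

Lemma adjmxD m n (A B : 'M[C]_(m, n)) : adjmx (A + B) = adjmx A + adjmx B.
Proof. by apply/matrixP => i j; rewrite !mxE rmorphD. Qed.

Lemma adjmxZ m n c (A : 'M[C]_(m, n)) : adjmx (c *: A) = c^* *: adjmx A.
Proof. by apply/matrixP => i j; rewrite !mxE rmorphM. Qed.

Lemma adjmx_delta n (j : 'I_n) : adjmx (delta_mx j 0) = delta_mx 0 j :> 'rV[C]_n.
Proof. by apply/matrixP => i l; rewrite !mxE rmorph_nat !ord1 andbC. Qed.

Lemma adjmx_mul_ge0 n (w : 'cV[C]_n) : 0 <= (adjmx w *m w) 0 0.
Proof. by rewrite mxE; apply: sumr_ge0 => j _; rewrite mxE mulrC mul_conjC_ge0. Qed.

Lemma adjmx_mul_eq0 n (w : 'cV[C]_n) : ((adjmx w *m w) 0 0 == 0) = (w == 0).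
Proof.
apply/idP/eqP => [|->]; last by rewrite mulmx0 mxE.
rewrite mxE psumr_eq0 => [/allP w0|j _]; last by rewrite mxE mulrC mul_conjC_ge0.
apply/matrixP => i j; rewrite ord1 mxE.
by have := w0 i (mem_index_enum _); rewrite mxE mulrC mul_conjC_eq0 => /eqP.
Qed.

Lemma qformD d (A B : 'M[C]_d) v : qform (A + B) v = qform A v + qform B v.
Proof. by rewrite /qform mulmxDr mulmxDl mxE. Qed.

Lemma qformZ d c (A : 'M[C]_d) v : qform (c *: A) v = c * qform A v.
Proof. by rewrite /qform -scalemxAr -scalemxAl mxE. Qed.

End Adjoint.

Section States.
Variables (R : realType) (d : nat).
Local Notation C := R[i].
Implicit Types (r X : 'M[C]_d) (psi : 'cV[C]_d).

Definition sqnorm psi : C := (adjmx psi *m psi) 0 0.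

Definition pure_state psi : 'M[C]_d := (sqnorm psi)^-1 *: (psi *m adjmx psi).

Definition mixture (l : R) r1 r2 : 'M[C]_d := (l%:C)%C *: r1 + ((1 - l)%:C)%C *: r2.

Lemma mxtrace_pure_state psi X : \tr (pure_state psi *m X) = qform X psi / sqnorm psi.
Proof.
by rewrite /pure_state -scalemxAl mxtraceZ -mulmxA mxtrace_mulC mulrC /mxtrace big_ord1.
Qed.

Lemma density_pure_state psi : psi != 0 -> density (pure_state psi).
Proof.
move=> psi0; have n0 : 0 <= (sqnorm psi)^-1 by rewrite invr_ge0 adjmx_mul_ge0.
split.
- rewrite /is_hermitian /pure_state adjmxZ adjmxM adjmxK geC0_conj //.
- move=> v; rewrite /pure_state qformZ mulr_ge0 // /qform.
  have -> : adjmx v *m (psi *m adjmx psi) *m v = adjmx (adjmx psi *m v) *m (adjmx psi *m v).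
    by rewrite adjmxM adjmxK !mulmxA.
  exact: adjmx_mul_ge0.
- by rewrite -[pure_state psi]mulmx1 mxtrace_pure_state /qform mulmx1 divff ?adjmx_mul_eq0.
Qed.

Lemma mean_pure_state_lt psi X Y : psi != 0 -> qform X psi < qform Y psi ->
  mean (pure_state psi) X < mean (pure_state psi) Y.
Proof.
move=> psi0 XY; rewrite /mean !mxtrace_pure_state.
suff : qform X psi / sqnorm psi < qform Y psi / sqnorm psi by rewrite ltcE => /andP[].
by rewrite ltr_pM2r // invr_gt0 lt0r adjmx_mul_eq0 psi0 adjmx_mul_ge0.
Qed.

Lemma mean_mixture l r1 r2 X :
  mean (mixture l r1 r2) X = l * mean r1 X + (1 - l) * mean r2 X.
Proof.
rewrite /mean /mixture mulmxDl -!scalemxAl mxtraceD !mxtraceZ.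
by case: (\tr (r1 *m X)) => ? ?; case: (\tr (r2 *m X)) => ? ? /=; rewrite !mul0r !subr0.
Qed.

Lemma density_mixture l r1 r2 : 0 <= l <= 1 -> density r1 -> density r2 ->
  density (mixture l r1 r2).
Proof.
move=> /andP[l0 l1] [h1 p1 t1] [h2 p2 t2]; split.
- by rewrite /is_hermitian /mixture adjmxD !adjmxZ !conj_Creal ?complex_real // h1 h2.
- move=> v; rewrite /mixture qformD !qformZ addr_ge0 // mulr_ge0 //.
    by rewrite ler0c.
  by rewrite ler0c subr_ge0.
- by rewrite /mixture mxtraceD !mxtraceZ t1 t2 !mulr1 -rmorphD /= addrC subrK.
Qed.

Lemma mean_sum r I (s : seq I) (F : I -> 'M[C]_d) :
  mean r (\sum_(i <- s) F i) = \sum_(i <- s) mean r (F i).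
Proof.
apply: (big_morph (mean r)) => [X Y|]; last by rewrite /mean mulmx0 mxtrace0.
by rewrite /mean mulmxDr mxtraceD; case: (\tr (r *m X)); case: (\tr (r *m Y)).
Qed.

Lemma mean_projector_ge0 r Q : density r -> projector Q -> 0 <= mean r Q.
Proof.
move=> [_ r0 _] [hQ QQ].
suff : 0 <= \tr (r *m Q) by rewrite lecE => /andP[].
rewrite -QQ mulmxA mxtrace_mulC mulmxA; apply: sumr_ge0 => j _.
have -> : (Q *m r *m Q) j j = qform r (col j Q).
  by rewrite /qform colE adjmxM hQ adjmx_delta -rowE !mulmxA -!row_mul -colE !mxE.
exact: r0.
Qed.

Lemma sum_mean_spectral r O m (lam : 'I_m -> R) P : density r ->
  spectral_decomp O lam P -> \sum_i mean r (P i) = 1.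
Proof. by move=> [_ _ tr1] [_ _ _ sumP _]; rewrite -mean_sum sumP /mean mulmx1 tr1. Qed.

End States.

Section Regret.
Variables (R : realType) (d k : nat) (O : 'I_k -> 'M[R[i]]_d) (m : 'I_k -> nat).
Variables (lam : forall a, 'I_(m a) -> R) (P : forall a, 'I_(m a) -> 'M[R[i]]_d).
Arguments lam : clear implicits.
Arguments P : clear implicits.
Hypothesis spectralO : forall a, spectral_decomp (O a) (lam a) (P a).
Implicit Types r : 'M[R[i]]_d.

Lemma gap_ge0 r a : 0 <= gap O r a.
Proof. by rewrite subr_ge0 (le_bigmax _ (fun b => mean r (O b)) a). Qed.

Lemma gap_ge r a b : mean r (O b) - mean r (O a) <= gap O r a.
Proof. by rewrite lerD2r (le_bigmax _ (fun b => mean r (O b)) b). Qed.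

Definition bhattacharyya r1 r2 a :=
  \sum_i Num.sqrt (mean r1 (P a i)) * Num.sqrt (mean r2 (P a i)).

Section PairLowerBound.
Variables (r1 r2 : 'M[R[i]]_d) (pi : policy R k) (g beta : R).
Hypotheses (pi_valid : valid_policy pi) (r1_density : density r1) (r2_density : density r2).
Hypotheses (g_ge0 : 0 <= g) (beta_ge0 : 0 <= beta).
Hypothesis gap_sum_ge : forall a, g <= gap O r1 a + gap O r2 a.
Hypothesis bhattacharyya_ge : forall a, beta <= bhattacharyya r1 r2 a.

Local Notation regret r := (exp_regret_from O lam P r pi).

Let S n := \sum_(s < n) beta ^+ s.

(* [u ^+ 2] and [v ^+ 2] stand for the probabilities of the history [h] under
   [r1] and [r2], so that [u * v] is the overlap of the two laws of [h]. *)
Lemma weighted_regret_sum_ge n h (u v : R) : 0 <= u -> 0 <= v ->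
  3/2 * g * S n * (u * v) - n%:R * (g / 2) * (u ^+ 2 + v ^+ 2)
  <= u ^+ 2 * regret r1 n h + v ^+ 2 * regret r2 n h.
Proof.
elim: n h u v => [|n IH] h u v u0 v0.
  by rewrite /S big_ord0 /= !(mulr0, mul0r, subr0, addr0).
have -> : S n.+1 = 1 + beta * S n.
  by rewrite /S big_ord_recl expr0 mulr_sumr; under eq_bigr do rewrite exprS.
rewrite /= [u ^+ 2 * _]mulr_sumr [v ^+ 2 * _]mulr_sumr -big_split /=.
under [X in _ <= X]eq_bigr do rewrite [u ^+ 2 * _]mulrCA [v ^+ 2 * _]mulrCA -mulrDr.
have [pi_ge0 pi_sum1] := pi_valid (size h).+1 h.
apply: ler_sum_convex => // a.
pose p r i := mean r (P a i).
have p_ge0 r i : density r -> 0 <= p r i.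
  by move=> dr; apply: mean_projector_ge0 => //; have [_ /(_ i) []] := spectralO a.
have next i : 3/2 * g * S n * (u * v) * (Num.sqrt (p r1 i) * Num.sqrt (p r2 i))
    - n%:R * (g / 2) * (u ^+ 2 * p r1 i + v ^+ 2 * p r2 i)
    <= u ^+ 2 * (p r1 i * regret r1 n (rcons h (a, lam a i)))
     + v ^+ 2 * (p r2 i * regret r2 n (rcons h (a, lam a i))).
  have := IH (rcons h (a, lam a i)) (u * Num.sqrt (p r1 i)) (v * Num.sqrt (p r2 i)).
  rewrite !mulr_ge0 ?sqrtr_ge0 // !exprMn !sqr_sqrtr ?p_ge0 // => /(_ isT isT).
  lra.
have := ler_sum (index_enum _) (fun i (_ : true) => next i).
rewrite sumrB -!mulr_sumr !big_split /= -!mulr_sumr.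
rewrite !(sum_mean_spectral _ (spectralO a)) // !mulr1.
have S0 : 0 <= S n by apply: sumr_ge0 => s _; rewrite exprn_ge0.
have K0 : 0 <= 3/2 * g * S n * (u * v) by rewrite !mulr_ge0 ?invr_ge0.
have := ler_wpM2l K0 (bhattacharyya_ge a); rewrite /bhattacharyya -/(p r1 _).
have g_split : 0 <= g <= gap O r1 a + gap O r2 a by rewrite g_ge0 gap_sum_ge.
have := split_weight_le (gap_ge0 r1 a) (gap_ge0 r2 a) g_split u0 v0.
rewrite -natr1; lra.
Qed.

Lemma exp_regret_sum_ge T : beta <= 1 -> T%:R * (1 - beta) <= 1/6 ->
  g * T%:R / 4 <= exp_regret O lam P r1 pi T + exp_regret O lam P r2 pi T.
Proof.
move=> beta_le1 /(sum_exprn_ge (T := T)); rewrite beta_ge0 beta_le1 => /(_ isT) sum_ge.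
have := weighted_regret_sum_ge T [::] ler01 ler01.
have := ler_wpM2l g_ge0 sum_ge; rewrite /exp_regret /S.
move: (exp_regret_from _ _ _ _ _ _ _) (exp_regret_from _ _ _ _ _ _ _) => *; lra.
Qed.

End PairLowerBound.

Section MixtureFamily.
Variables (rA rB : 'M[R[i]]_d) (l0 : R) (u b : 'I_k).
Local Notation qA x := (mean rA (O x)).
Local Notation qB x := (mean rB (O x)).
Hypotheses (rA_density : density rA) (rB_density : density rB) (l0_01 : 0 < l0 < 1).
Hypothesis b_max : forall x, l0 * qA x + (1 - l0) * qB x <= l0 * qA b + (1 - l0) * qB b.
Hypothesis u_tie : l0 * qA u + (1 - l0) * qB u = l0 * qA b + (1 - l0) * qB b.
Hypothesis u_steeper : qA b - qB b < qA u - qB u.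

Let mu := Num.min l0 (1 - l0).
Let gam := (qA u - qB u) - (qA b - qB b).
Local Notation rho l := (mixture l rA rB).

Let mu_gt0 : 0 < mu.
Proof. by rewrite lt_min subr_gt0; case/andP: l0_01 => -> ->. Qed.

Let mu_le : mu <= l0 /\ mu <= 1 - l0.
Proof. by rewrite !ge_min !lexx ?orbT. Qed.

Let mu01 : 0 < mu <= 1.
Proof. by rewrite mu_gt0 (le_trans mu_le.1) // ltW; case/andP: l0_01. Qed.

Lemma gap_mixture_sum_ge (eps : R) x :
  eps * gam <= gap O (rho (l0 + eps)) x + gap O (rho (l0 - eps)) x.
Proof.
have := envelope_gap_sum (qA := fun y => mean rA (O y)) (qB := fun y => mean rB (O y))
  eps (b_max x) u_tie.
rewrite /= -4!mean_mixture => /le_trans; apply.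
by apply: lerD; apply: gap_ge.
Qed.

Lemma density_mixture_pm (eps : R) : 0 <= eps <= mu / 12 ->
  density (rho (l0 + eps)) /\ density (rho (l0 - eps)).
Proof.
move=> /andP[eps0 eps_mu]; have [mu_l0 mu_l1] := mu_le.
by split; apply: density_mixture => //; apply/andP; split; lra.
Qed.

Lemma bhattacharyya_mixture_ge (eps : R) x : 0 <= eps <= mu ->
  1 - 2 / mu * eps ^+ 2 <= bhattacharyya (rho (l0 + eps)) (rho (l0 - eps)) x.
Proof.
move=> eps_bd; have [mu_l0 mu_l1] := mu_le.
have pge0 r i : density r -> 0 <= mean r (P x i).
  by move=> dr; apply: mean_projector_ge0 => //; have [_ /(_ i) []] := spectralO x.
rewrite /bhattacharyya; under eq_bigr do rewrite !mean_mixture.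
apply: le_trans (ler_sum _ (fun i _ =>
  sqrt_mix_mul_ge (pge0 rA i rA_density) (pge0 rB i rB_density) mu_gt0 mu_l0 mu_l1 eps_bd)).
rewrite big_split /= -!mulr_sumr !(sum_mean_spectral _ (spectralO x)) //.
by rewrite !mulr1; lra.
Qed.

Lemma exp_regret_mixture_sum_ge T pi (eps : R) : valid_policy pi ->
  0 <= eps <= mu / 12 -> eps ^+ 2 * T%:R <= (mu / 12) ^+ 2 ->
  eps * gam * T%:R / 4
    <= exp_regret O lam P (rho (l0 + eps)) pi T + exp_regret O lam P (rho (l0 - eps)) pi T.
Proof.
move=> pi_valid eps_bd epsT.
have [eps_mu beta01 Tbeta] := small_perturbation_bounds mu01 eps_bd epsT.
have [d1 d2] := density_mixture_pm eps_bd.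
have [eps0 _] := andP eps_bd.
have gam0 : 0 <= gam by rewrite /gam subr_ge0 ltW.
apply: (exp_regret_sum_ge (beta := 1 - 2 / mu * eps ^+ 2) pi_valid d1 d2) => //.
- by rewrite mulr_ge0.
- by case/andP: beta01.
- exact: gap_mixture_sum_ge.
- by move=> x; apply: bhattacharyya_mixture_ge; rewrite eps0.
- by case/andP: beta01.
Qed.

Lemma exp_regret_mixture_ge T pi : valid_policy pi ->
  exists2 l, density (rho l) & gam * mu / 96 * Num.sqrt T%:R <= exp_regret O lam P (rho l) pi T.
Proof.
move=> pi_valid.
have [eps_bd epsT2 epsT] := div_sqrtn_bounds T (ltW (divr_gt0 mu_gt0 (ltr0n _ 12))).
set eps := mu / 12 / _ in eps_bd epsT2 epsT.
have := exp_regret_mixture_sum_ge pi_valid eps_bd epsT2.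
rewrite [eps * gam * _]mulrAC epsT.
have -> : mu / 12 * Num.sqrt T%:R * gam / 4 = gam * mu / 96 * Num.sqrt T%:R * 2 by field.
have [d1 d2] := density_mixture_pm eps_bd.
set R1 := exp_regret _ _ _ _ _ _; set R2 := exp_regret _ _ _ _ _ _ => sum_ge.
have [R21|R12] := leP R2 R1.
- by exists (l0 + eps); last exact: le_of_double_le_add sum_ge R21.
- exists (l0 - eps) => //; rewrite addrC in sum_ge.
  exact: le_of_double_le_add sum_ge (ltW R12).
Qed.

End MixtureFamily.
End Regret.

Theorem mainTheorem5 (R : realType) (d k : nat) (O : 'I_k -> 'M[R[i]]_d)
    (m : 'I_k -> nat) (lam : forall a, 'I_(m a) -> R)
    (P : forall a, 'I_(m a) -> 'M[R[i]]_d) :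
  (forall a, is_hermitian (O a)) ->
  (forall a, \tr (O a) = 0) ->
  (forall a, spectral_decomp (O a) (lam a) (P a)) ->
  (exists (a b : 'I_k) (psiA psiB : 'cV[R[i]]_d),
      [/\ a != b, top_eigvec (O a) psiA, top_eigvec (O b) psiB,
          forall i, i != a -> qform (O i) psiA < qform (O a) psiA
        & forall j, j != b -> qform (O j) psiB < qform (O b) psiB]) ->
  exists CA : R, 0 < CA /\
    forall (T : nat) (pi : policy R k), valid_policy pi ->
      exists rho : 'M[R[i]]_d, density rho /\
        CA * Num.sqrt (T%:R) <= exp_regret O lam P rho pi T.
Proof.
move=> _ _ spectralO [a [b [psiA [psiB [ab [psiA0 _] [psiB0 _] maxA maxB]]]]].
pose rA := pure_state psiA; pose rB := pure_state psiB.
have [l0 [u [l0_01 b_max u_tie u_steeper]]] :=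
  upper_envelope_kink (qA := fun x => mean rA (O x)) (qB := fun x => mean rB (O x)) ab
    (fun x xa => mean_pure_state_lt psiA0 (maxA x xa))
    (fun x xb => mean_pure_state_lt psiB0 (maxB x xb)).
have mu0 : 0 < Num.min l0 (1 - l0) by rewrite lt_min subr_gt0; case/andP: l0_01 => -> ->.
exists ((mean rA (O u) - mean rB (O u) - (mean rA (O b) - mean rB (O b)))
  * Num.min l0 (1 - l0) / 96); split => [|T pi pi_valid].
  by rewrite !divr_gt0 ?mulr_gt0 ?subr_gt0.
have [l dl] := exp_regret_mixture_ge spectralO (density_pure_state psiA0)
  (density_pure_state psiB0) l0_01 b_max u_tie u_steeper T pi_valid.
by exists (mixture l rA rB).
Qed.
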